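(* The identities (A8) $x\wedge(y\wedge z)\approx (z\wedge x)\wedge y$, (J5') $x\approx (x'\wedge y)'\wedge(x'\wedge y')'$ form a 2-base for the variety $\mathbb{BA}$ of Boolean algebras (in the language $\langle\wedge,{}'\rangle$).
   Context: Algebras are of type $\langle \wedge, {}'\rangle$ with $\wedge$ binary and ${}'$ unary. The variety $\mathbb{BA}$ of Boolean algebras in this language consists of the algebras $\langle B,\wedge,{}'\rangle$ obtained from Boolean algebras by keeping only meet and complement (equivalently, the variety generated by the two-element Boolean algebra with meet and complement). A base for a variety is an independent set of identities (no identity in the set follows from the others) that defines the variety; an $n$-base is a base with exactly $n$ identities. *)

From Stdlib Require Import List Bool Arith.
Import ListNotations.

Inductive term : Type :=
| Var : nat -> term
| Meet : term -> term -> term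
| Comp : term -> term.

Record algebra : Type := Algebra {
  carrier : Type;
  ameet : carrier -> carrier -> carrier;
  acomp : carrier -> carrier }.

Fixpoint eval (A : algebra) (v : nat -> carrier A) (t : term) : carrier A :=
  match t with
  | Var n => v n
  | Meet s u => ameet A (eval A v s) (eval A v u)
  | Comp s => acomp A (eval A v s)
  end.

Definition identity : Type := (term * term)%type.

Definition satisfies (A : algebra) (e : identity) : Prop :=
  forall v : nat -> carrier A, eval A v (fst e) = eval A v (snd e).

Definition two : algebra := Algebra bool andb negb.

(* The variety BA generated by the two-element Boolean algebra
   = the class of algebras satisfying every identity valid in it. *)
Definition in_BA (A : algebra) : Prop :=
  forall e : identity, satisfies two e -> satisfies A e.

Definition defines (E : list identity) (V : algebra -> Prop) : Prop :=
  forall A : algebra, (forall e, In e E -> satisfies A e) <-> V A.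

Definition triv_id : identity := (Var 0, Var 0).

Definition independent (E : list identity) : Prop :=
  forall i, i < length E ->
    ~ (forall A : algebra,
         (forall j, j < length E -> j <> i -> satisfies A (nth j E triv_id)) ->
         satisfies A (nth i E triv_id)).

Definition is_base (E : list identity) (V : algebra -> Prop) : Prop :=
  defines E V /\ independent E.

Definition vx := Var 0.
Definition vy := Var 1.
Definition vz := Var 2.

Definition A8 : identity := (Meet vx (Meet vy vz), Meet (Meet vz vx) vy).

Definition J5' : identity :=
  (vx, Meet (Comp (Meet (Comp vx) vy)) (Comp (Meet (Comp vx) (Comp vy)))).

(* (A8) alone lets any meet of four or more factors commute with every element,
   while (J5') with y := x writes every element as a meet of two factors, hence,
   iterating, of four; so the meet is commutative, and then associative by (A8).
   (J5') is then the dual of Huntington's axiom x = (x' + y)' + (x' + y')', and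
   Huntington's argument gives x'' = x, a constant 0 = x x' absorbing everything,
   its complement as a unit, and idempotence.  An identity valid in 2 then holds:
   meeting with the minterm of a 0/1 assignment b sends a term to the minterm or to
   0 according to its value at b, and minterms separate elements.  For independence,
   the left projection with identity complement satisfies (J5') but not (A8), and
   conjunction with identity complement satisfies (A8) but not (J5'). *)

From Stdlib Require Import List Arith Lia.
Import ListNotations.

Section A8Magma.
Variable A : algebra.
Local Notation "x ⊓ y" := (ameet A x y) (at level 40, left associativity).
Local Notation "- x" := (acomp A x).

Hypothesis a8 : forall x y z, x ⊓ (y ⊓ z) = z ⊓ x ⊓ y.
Hypothesis huntington : forall x y, x = -(-x ⊓ y) ⊓ -(-x ⊓ -y).

Lemma a8_long_meet_comm a b c d e :
  a ⊓ (b ⊓ (c ⊓ (d ⊓ e))) = b ⊓ (c ⊓ (d ⊓ e)) ⊓ a.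
Proof.
  transitivity (e ⊓ c ⊓ (b ⊓ d ⊓ a)).
  - rewrite (a8 a b), (a8 c d e), <- (a8 d a), <- (a8 (a ⊓ (e ⊓ c)) b d).
    symmetry; apply a8.
  - rewrite <- (a8 c (b ⊓ d ⊓ a) e), <- (a8 a e (b ⊓ d)), (a8 c a), (a8 e b d),
      (a8 b c).
    reflexivity.
Qed.

Lemma meetC_A8 x y : x ⊓ y = y ⊓ x.
Proof.
  set (f t := -(-t ⊓ t)); set (g t := -(-t ⊓ -t)).
  assert (split : forall t, t = f t ⊓ g t) by (intro t; apply huntington).
  rewrite (split y), (split (g y)), (split (g (g y))).
  apply a8_long_meet_comm.
Qed.

Lemma meetA_A8 x y z : x ⊓ (y ⊓ z) = x ⊓ y ⊓ z.
Proof. rewrite (meetC_A8 y z), a8, (meetC_A8 y x). reflexivity. Qed.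

End A8Magma.

Section Huntington.
Variable A : algebra.
Local Notation X := (carrier A).
Local Notation "x ⊓ y" := (ameet A x y) (at level 40, left associativity).
Local Notation "- x" := (acomp A x).

Hypothesis meetC : forall x y, x ⊓ y = y ⊓ x.
Hypothesis meetA : forall x y z, x ⊓ (y ⊓ z) = x ⊓ y ⊓ z.
Hypothesis huntington : forall x y, x = -(-x ⊓ y) ⊓ -(-x ⊓ -y).

Lemma meetCA x y z : x ⊓ (y ⊓ z) = y ⊓ (x ⊓ z).
Proof. rewrite !meetA, (meetC x y). reflexivity. Qed.

(* (J5') at y and at y' factor x as a ⊓ b and b ⊓ c, so x ⊓ c = a ⊓ x. *)
Lemma meet_huntington_compl2 x y : x ⊓ -(-x ⊓ - - y) = x ⊓ -(-x ⊓ y).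
Proof.
  rewrite (huntington x y) at 1.
  rewrite <- meetA, <- (huntington x (-y)).
  apply meetC.
Qed.

Lemma compl_meet_compl2 x : -x ⊓ - - x = -x ⊓ x.
Proof.
  rewrite (huntington (- - x) (-x)), (meetC (- - - x) (- - x)).
  rewrite (meetCA (-x)), meet_huntington_compl2, (meetCA (-(- - - x ⊓ -x))).
  rewrite (meetC (- - - x)), (meetC (- - x)), (meetC (-(-x ⊓ - - - x))).
  rewrite <- (huntington x (- - x)).
  reflexivity.
Qed.

Lemma compl_invol x : - - x = x.
Proof.
  rewrite (huntington (- - x) (-x)), (meetC (- - - x) (- - x)), compl_meet_compl2.
  symmetry; rewrite (huntington x (- - x)) at 1.
  rewrite meetC, (meetC (- - - x)), (meetC (- - x)).
  reflexivity.
Qed.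

Lemma huntington_compl x y : -x = -(x ⊓ y) ⊓ -(x ⊓ -y).
Proof. rewrite (huntington (-x) y) at 1. rewrite compl_invol. reflexivity. Qed.

Lemma meet_compl_sym x y : x ⊓ -(x ⊓ -y) = y ⊓ -(y ⊓ -x).
Proof.
  rewrite (huntington x y) at 1.
  rewrite <- meetA, (meetC (-x) (-y)), (meetC x (-y)), (meetC (-(-y ⊓ -x))).
  rewrite <- huntington, meetC, (meetC (-x)).
  reflexivity.
Qed.

Lemma meet_compl_const x y : x ⊓ -x = y ⊓ -y.
Proof.
  rewrite (huntington_compl x y), (meetCA x), meet_compl_sym, (meetCA (-(x ⊓ y))).
  rewrite (meetC x y), <- huntington_compl.
  reflexivity.
Qed.

Lemma meet_bot x y : x ⊓ (y ⊓ -y) = y ⊓ -y.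
Proof.
  rewrite (meet_compl_const y x), meetA.
  rewrite (huntington_compl x x) at 1.
  rewrite meetA, (meet_compl_const (x ⊓ x) x).
  apply meet_compl_const.
Qed.

Lemma meet_top x y : x ⊓ -(y ⊓ -y) = x.
Proof.
  rewrite <- (meet_bot x y), <- (compl_invol (y ⊓ -y)), meet_compl_sym.
  symmetry; rewrite (huntington x (y ⊓ -y)) at 1.
  rewrite meet_bot, (meetC (-x)).
  reflexivity.
Qed.

Lemma meet_idem x : x ⊓ x = x.
Proof.
  assert (compl_idem : -x = -(x ⊓ x)).
  { rewrite (huntington_compl x x) at 1. apply meet_top. }
  rewrite <- (compl_invol (x ⊓ x)), <- compl_idem.
  apply compl_invol.
Qed.

Definition lit (s : bool) (p : X) : X := if s then p else -p.

Lemma eq_of_lit_meet p x y : (forall s, lit s p ⊓ x = lit s p ⊓ y) -> x = y.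
Proof.
  intros eq_lit.
  pose proof (eq_lit true) as eq_pos; pose proof (eq_lit false) as eq_neg.
  simpl in eq_pos, eq_neg.
  rewrite <- (compl_invol x), <- (compl_invol y), (huntington_compl x p),
    (huntington_compl y p), !(meetC _ p), !(meetC _ (-p)), eq_pos, eq_neg.
  reflexivity.
Qed.

Lemma meet_compl_of_disjoint x y : x ⊓ y = x ⊓ -x -> x ⊓ -y = x.
Proof.
  intros disj; apply (eq_of_lit_meet y); intros [|]; simpl.
  - rewrite meetCA, meet_bot, (meetC y x), disj.
    apply meet_compl_const.
  - rewrite meetA, (meetC (-y) x), <- meetA, meet_idem.
    reflexivity.
Qed.

Fixpoint minterm (v : nat -> X) (b : nat -> bool) (n : nat) : X :=
  match n with
  | 0 => lit (b 0) (v 0)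
  | S k => lit (b (S k)) (v (S k)) ⊓ minterm v b k
  end.

Lemma minterm_meet_lit v b n i : i <= n -> minterm v b n ⊓ lit (b i) (v i) = minterm v b n.
Proof.
  induction n as [|n IH]; intros le_i_n; simpl.
  - replace i with 0 by lia. apply meet_idem.
  - destruct (Nat.eq_dec i (S n)) as [->|ne_i_Sn].
    + rewrite <- meetA, (meetC (minterm v b n)), meetA, meet_idem. reflexivity.
    + rewrite <- meetA, IH by lia. reflexivity.
Qed.

Fixpoint max_var (t : term) : nat :=
  match t with
  | Var i => i
  | Meet s u => Nat.max (max_var s) (max_var u)
  | Comp s => max_var s
  end.

Lemma minterm_meet_eval v b n t : max_var t <= n ->
  minterm v b n ⊓ eval A v t
  = if eval two b t then minterm v b n else minterm v b n ⊓ - minterm v b n.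
Proof.
  induction t as [i|s IHs u IHu|s IHs]; simpl; intros le_t_n.
  - pose proof (minterm_meet_lit v b n i le_t_n) as M_lit.
    unfold lit in M_lit; destruct (b i).
    + exact M_lit.
    + rewrite <- M_lit at 1.
      rewrite <- meetA, (meetC (- v i)), meet_bot.
      apply meet_compl_const.
  - rewrite meetA, IHs by lia.
    destruct (eval two b s); simpl.
    + apply IHu; lia.
    + rewrite meetC. apply meet_bot.
  - destruct (eval two b s); simpl.
    + rewrite <- (IHs le_t_n) at 1.
      rewrite <- meetA, meet_bot.
      apply meet_compl_const.
    + apply meet_compl_of_disjoint, IHs, le_t_n.
Qed.

Definition update (b : nat -> bool) (k : nat) (s : bool) (i : nat) : bool :=
  if Nat.eqb i k then s else b i.

Lemma minterm_update_lt v b k s n : n < k -> minterm v (update b k s) n = minterm v b n.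
Proof.
  induction n as [|n IH]; intros lt_n_k; cbn [minterm].
  - unfold update; destruct (Nat.eqb_spec 0 k); [lia | reflexivity].
  - rewrite IH by lia.
    unfold update; destruct (Nat.eqb_spec (S n) k); [lia | reflexivity].
Qed.

Lemma minterm_update_succ v b n s :
  minterm v (update b (S n) s) (S n) = lit s (v (S n)) ⊓ minterm v b n.
Proof.
  cbn [minterm]; rewrite minterm_update_lt by lia.
  unfold update; rewrite Nat.eqb_refl.
  reflexivity.
Qed.

Lemma eq_of_minterm_meet v n x y :
  (forall b, minterm v b n ⊓ x = minterm v b n ⊓ y) -> x = y.
Proof.
  revert x y; induction n as [|n IH]; intros x y eq_minterm.
  - apply (eq_of_lit_meet (v 0)); intro s.
    exact (eq_minterm (fun _ => s)).
  - apply (eq_of_lit_meet (v (S n))); intro s.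
    apply IH; intro b.
    pose proof (eq_minterm (update b (S n) s)) as eq_b.
    rewrite minterm_update_succ, <- !meetA in eq_b.
    rewrite !(meetCA (minterm v b n)).
    exact eq_b.
Qed.

Lemma satisfies_of_two e : satisfies two e -> satisfies A e.
Proof.
  destruct e as [s t]; intros valid_two v; simpl.
  apply (eq_of_minterm_meet v (Nat.max (max_var s) (max_var t))); intro b.
  rewrite !minterm_meet_eval by lia.
  rewrite (valid_two b : eval two b s = eval two b t).
  reflexivity.
Qed.

End Huntington.

Definition assign3 {T : Type} (x y z : T) (n : nat) : T :=
  match n with 0 => x | 1 => y | _ => z end.

Lemma in_BA_of_A8_J5' A : satisfies A A8 -> satisfies A J5' -> in_BA A.
Proof.
  intros A8_A J5'_A.
  assert (a8 : forall x y z, ameet A x (ameet A y z) = ameet A (ameet A z x) y)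
    by (intros x y z; exact (A8_A (assign3 x y z))).
  assert (huntington : forall x y,
    x = ameet A (acomp A (ameet A (acomp A x) y)) (acomp A (ameet A (acomp A x) (acomp A y))))
    by (intros x y; exact (J5'_A (assign3 x y x))).
  intros e.
  apply satisfies_of_two; [apply meetC_A8 | apply meetA_A8 |]; assumption.
Qed.

Lemma two_A8 : satisfies two A8.
Proof. intro v; simpl; destruct (v 0), (v 1), (v 2); reflexivity. Qed.

Lemma two_J5' : satisfies two J5'.
Proof. intro v; simpl; destruct (v 0), (v 1); reflexivity. Qed.

Definition left_proj : algebra := Algebra bool (fun x _ => x) (fun x => x).
Definition and_id : algebra := Algebra bool andb (fun x => x).

Lemma left_proj_J5' : satisfies left_proj J5'.
Proof. intro v; reflexivity. Qed.

Lemma left_proj_not_A8 : ~ satisfies left_proj A8.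
Proof. intro A8_holds; discriminate (A8_holds (assign3 true true false)). Qed.

Lemma and_id_A8 : satisfies and_id A8.
Proof. intro v; simpl; destruct (v 0), (v 1), (v 2); reflexivity. Qed.

Lemma and_id_not_J5' : ~ satisfies and_id J5'.
Proof. intro J5'_holds; discriminate (J5'_holds (assign3 true false false)). Qed.

Lemma independent_pair e1 e2 A1 A2 :
  satisfies A1 e2 -> ~ satisfies A1 e1 ->
  satisfies A2 e1 -> ~ satisfies A2 e2 ->
  independent [e1; e2].
Proof.
  intros sat12 nsat11 sat21 nsat22 i lt_i_2 implied; simpl in lt_i_2.
  destruct i as [|[|i]]; [| | lia].
  - apply nsat11, (implied A1).
    intros [|[|j]] lt_j ne_j; simpl in *; [congruence | exact sat12 | lia].
  - apply nsat22, (implied A2).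
    intros [|[|j]] lt_j ne_j; simpl in *; [exact sat21 | congruence | lia].
Qed.

Theorem theorem5p1 : length [A8; J5'] = 2 /\ is_base [A8; J5'] in_BA.
Proof.
  split; [reflexivity | split].
  - intro A; split.
    + intros sat_all.
      apply in_BA_of_A8_J5'; apply sat_all; simpl; auto.
    + intros in_BA_A e [<- | [<- | []]]; apply in_BA_A.
      * exact two_A8.
      * exact two_J5'.
  - exact (independent_pair A8 J5' left_proj and_id
             left_proj_J5' left_proj_not_A8 and_id_A8 and_id_not_J5').
Qed.
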